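(* Let $p$ be a prime, let $r$ be a prime different from $p$, and let $a,c,t$ be positive integers with $t\ge 2$ such that $c$ is a primitive divisor of $p^a-1$ and $\gcd\big(\tfrac{p^a-1}{c},r\big)=1$. Suppose that either (i) $r=2$ and $p^a\equiv 1\pmod 4$, or (ii) $r$ is odd and the multiplicative order of $p^a$ modulo $r^t$ equals $r^h$ for some $0\le h\le t-1$. Then $$g\Big(\tfrac{p^{ar^t}-1}{c\,r^t},\,p^{ar^t}\Big)=r^t\,g\Big(\tfrac{p^a-1}{c},\,p^a\Big).$$
   Context: For a prime power $q$ and a positive integer $k$, the Waring number $g(k,q)$ is the smallest $s$ (if it exists) such that every element of $\mathbb{F}_q$ is a sum of $s$ $k$-th powers of elements of $\mathbb{F}_q$. An integer $e$ is a primitive divisor of $p^a-1$ if $e\mid p^a-1$ and $e\nmid p^s-1$ for every $1\le s<a$. *)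

From HB Require Import structures.
From mathcomp Require Import all_boot all_order all_algebra all_field.
Set Implicit Arguments. Unset Strict Implicit. Unset Printing Implicit Defensive.
Import GRing.Theory.

Definition waring_sums (F : finFieldType) (k s : nat) : Prop :=
  forall x : F, exists f : 'I_s -> F, x = (\sum_(i < s) (f i) ^+ k)%R.

Definition is_waring_number (F : finFieldType) (k s : nat) : Prop :=
  waring_sums F k s /\ forall s', waring_sums F k s' -> s <= s'.

Definition primitive_divisor (p a e : nat) : Prop :=
  e %| p ^ a - 1 /\ forall s, 1 <= s < a -> ~~ (e %| p ^ s - 1).

Definition mult_order_mod (m x n : nat) : Prop :=
  0 < n /\ x ^ n = 1 %[mod m] /\ forall j, 0 < j < n -> x ^ j <> 1 %[mod m].

From Stdlib Require Import Classical_Prop Classical_Pred_Type Wf_nat.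
From HB Require Import structures.
From mathcomp Require Import all_boot all_order all_algebra all_field all_solvable ring.
Set Implicit Arguments. Unset Strict Implicit. Unset Printing Implicit Defensive.

(* Write q = p^a and n = r^t. The k-th powers of F_q for k = (q - 1)/c are 0 and the
   c-th roots of unity; those of F_(q^n) for k' = (q^n - 1)/(c n) are 0 and the
   (c n)-th roots of unity. Lifting the exponent makes c n a primitive divisor of
   q^n - 1, so a primitive (c n)-th root of unity beta has n distinct conjugates over
   F_q: 1, beta, ..., beta^(n-1) is a basis of F_(q^n) over F_q, and every (c n)-th
   root of unity is zeta beta^i with zeta^c = 1 and i < n. Hence a sum of k'-th powers
   in F_(q^n) is, coordinatewise, a sum of k-th powers in F_q, and g(k', q^n) = n g(k, q). *)

(** * Lifting the exponent *)

Lemma expn_add1_expand m i :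
  exists U, (1 + m) ^ i = 1 + i * m + 'C(i, 2) * m ^ 2 + m ^ 3 * U.
Proof.
elim: i => [|i [U IH]]; first by exists 0; rewrite bin0n /= muln0 !addn0.
by exists ('C(i, 2) + U + U * m); rewrite expnS IH binS bin1; ring.
Qed.

(* [lte_cond r (q - 1)] is the hypothesis of the lifting-the-exponent lemma: the
   r-adic valuation of q^(r^j) - 1 is then that of q - 1 plus j. *)
Definition lte_cond r m := ((r == 2) && (4 %| m)) || (odd r && (r %| m)).

Lemma lte_cond_dvd r m m' : lte_cond r m -> m %| m' -> lte_cond r m'.
Proof.
by case/orP=> /andP[r_ok dv_m] dv_mm'; rewrite /lte_cond r_ok (dvdn_trans dv_m dv_mm') ?orbT.
Qed.

Lemma lte_step r m : prime r -> lte_cond r m ->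
  exists z, (1 + m) ^ r - 1 = m * r * (1 + r * z).
Proof.
move=> pr_r /orP[/andP[/eqP-> /dvdnP[m2 ->]] | /andP[odd_r /dvdnP[m1 ->]]].
  exists m2; rewrite expnS expn1; apply/eqP.
  by rewrite -(eqn_add2r 1) subnK ?muln_gt0 //; apply/eqP; ring.
have [U ->] := expn_add1_expand (m1 * r) r.
have bin2r : 'C(r, 2) = r * r./2.
  by rewrite bin2 -{2}(odd_double_half r) odd_r -doubleMr doubleK.
by exists (r./2 * m1 + m1 ^ 2 * U); rewrite bin2r -!addnA addKn; ring.
Qed.

Lemma lte_expn_ppow r q j : prime r -> 0 < q -> lte_cond r (q - 1) ->
  exists2 u, coprime u r & q ^ (r ^ j) - 1 = (q - 1) * r ^ j * u.
Proof.
move=> pr_r q_gt0 hq; elim: j => [|j [u u_r Eu]].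
  by exists 1; rewrite ?coprime1n // expn0 expn1 !muln1.
have [z Ez] : exists z, (1 + (q ^ r ^ j - 1)) ^ r - 1 = (q ^ r ^ j - 1) * r * (1 + r * z).
  by apply: lte_step (lte_cond_dvd hq _); rewrite // Eu -mulnA dvdn_mulr.
rewrite subnKC ?expn_gt0 ?q_gt0 // in Ez.
exists (u * (1 + r * z)); last by rewrite expnSr expnM Ez Eu; ring.
by rewrite coprimeMl u_r -coprime_modl addnC mulnC modnMDl modn_small ?coprime1n ?prime_gt1.
Qed.

Lemma expn_mod1M D x e k : x ^ e = 1 %[mod D] -> x ^ (e * k) = 1 %[mod D].
Proof. by move=> xe; rewrite expnM -modnXm xe modnXm exp1n. Qed.

Lemma expn_mod1_gcd D x e f : 0 < e ->
  x ^ e = 1 %[mod D] -> x ^ f = 1 %[mod D] -> x ^ gcdn e f = 1 %[mod D].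
Proof.
move=> e_gt0 xe xf; have [a _ /dvdnP[k Bez]] := Bezoutl f e_gt0.
have := expn_mod1M k xe; rewrite mulnC -Bez expnD -modnMmr (mulnC a) (expn_mod1M a xf).
by rewrite modnMmr muln1.
Qed.

Lemma primitive_divisor_mul_ppow r q c t : prime r -> 0 < t -> c %| q - 1 ->
  coprime ((q - 1) %/ c) r -> lte_cond r (q - 1) -> primitive_divisor q (r ^ t) (c * r ^ t).
Proof.
move=> pr_r t_gt0 dv_c cop hq; set d := (q - 1) %/ c in cop.
have q_gt1 : 1 < q.
  rewrite ltnNge; apply: contraL cop => q_le1.
  by rewrite /d (eqP q_le1) div0n /coprime gcd0n gtn_eqF ?prime_gt1.
have q_gt0 := ltnW q_gt1.
have [u _ Eu] := lte_expn_ppow t pr_r q_gt0 hq.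
have Eq : q - 1 = d * c by rewrite divnK.
split=> [|e /andP[e_gt0 e_lt]]; first by rewrite Eu Eq; apply/dvdnP; exists (d * u); ring.
apply/negP; rewrite -eqn_mod_dvd ?expn_gt0 ?q_gt0 // => /eqP qe.
have /eqP qn : q ^ r ^ t == 1 %[mod c * r ^ t].
  by rewrite eqn_mod_dvd ?expn_gt0 ?q_gt0 // Eu Eq; apply/dvdnP; exists (d * u); ring.
have [m Em] : exists m, r ^ (t - 1) = gcdn e (r ^ t) * m.
  have gl := dvdn_gcdl e (r ^ t).
  have [k _ Eg] := dvdn_pfactor _ _ pr_r (dvdn_gcdr e (r ^ t)); rewrite Eg in gl *.
  have := leq_ltn_trans (dvdn_leq e_gt0 gl) e_lt; rewrite ltn_exp2l ?prime_gt1 // => k_lt.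
  exists (r ^ (t - 1 - k)); rewrite -expnD subnKC //.
  by rewrite -ltnS subn1 prednK.
have /eqP : q ^ r ^ (t - 1) = 1 %[mod c * r ^ t].
  by rewrite Em expn_mod1M // expn_mod1_gcd.
have [u' u'_r Eu'] := lte_expn_ppow (t - 1) pr_r q_gt0 hq.
have c_gt0 : 0 < c by rewrite (dvdn_gt0 _ dv_c) ?subn_gt0.
rewrite eqn_mod_dvd ?expn_gt0 ?q_gt0 // Eu'.
have -> : r ^ t = r ^ (t - 1) * r by rewrite -expnSr subn1 prednK.
have -> : (q - 1) * r ^ (t - 1) * u' = c * r ^ (t - 1) * (d * u') by rewrite Eq; ring.
rewrite mulnA dvdn_pmul2l ?muln_gt0 ?c_gt0 ?expn_gt0 ?prime_gt0 //.
rewrite Euclid_dvdM // -[_ %| d]negbK -[_ %| u']negbK -!prime_coprime //.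
by rewrite !(coprime_sym r) cop u'_r.
Qed.

Lemma ppow_order_dvd_sub1 r q t h : prime r -> 0 < t -> 0 < q ->
  q ^ (r ^ h) = 1 %[mod r ^ t] -> r %| q - 1.
Proof.
move=> pr_r t_gt0 q_gt0 q_ord; rewrite -eqn_mod_dvd //.
have <- : q ^ (r ^ h) = q %[mod r].
  by elim: h {q_ord} => [|h IHh]; rewrite ?expn1 // expnSr expnM -modnXm IHh modnXm fermat_little.
have dv_rt : r %| r ^ t by rewrite dvdn_exp.
by rewrite -(modn_dvdm (q ^ r ^ h) dv_rt) -(modn_dvdm 1 dv_rt) q_ord.
Qed.

Import GRing.Theory.
Local Open Scope ring_scope.

(** * Bases of finite fields from Frobenius conjugates *)

Section FrobeniusPower.
Variables (R : comNzRingType) (Q : nat).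

Definition frobenius_pow of [pchar R].-nat Q := fun x : R => x ^+ Q.

Hypothesis pcharQ : [pchar R].-nat Q.

Fact frobenius_pow_is_nmod_morphism : nmod_morphism (frobenius_pow pcharQ).
Proof.
split=> [|x y]; last exact: exprDn_pchar.
by rewrite /frobenius_pow expr0n; case/andP: pcharQ => /lt0n_neq0/negPf->.
Qed.

Fact frobenius_pow_is_monoid_morphism : monoid_morphism (frobenius_pow pcharQ).
Proof. by split=> [|x y]; rewrite /frobenius_pow (expr1n, exprMn). Qed.

Lemma frobenius_powE x : frobenius_pow pcharQ x = x ^+ Q. Proof. by []. Qed.

HB.instance Definition _ := GRing.isNmodMorphism.Build R R (frobenius_pow pcharQ)
  frobenius_pow_is_nmod_morphism.
HB.instance Definition _ := GRing.isMonoidMorphism.Build R R (frobenius_pow pcharQ)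
  frobenius_pow_is_monoid_morphism.

End FrobeniusPower.

Section FrobeniusFree.
Variables (F : fieldType) (Q n : nat) (theta : F).
Hypotheses (pcharQ : [pchar F].-nat Q)
  (theta_conj : forall e, (0 < e < n)%N -> theta ^+ (Q ^ e) != theta).

Lemma frobenius_fix_exp (x : F) j : x ^+ Q = x -> x ^+ (Q ^ j) = x.
Proof. by move=> xQ; elim: j => [|j IHj]; rewrite ?expr1 // expnS exprM xQ. Qed.

Lemma uniq_frobenius_conj : uniq [seq theta ^+ (Q ^ j) | j <- iota 0 n].
Proof.
rewrite map_inj_in_uniq ?iota_uniq // => j l.
rewrite !mem_iota !add0n => /andP[_ j_lt] /andP[_ l_lt].
wlog le_jl : j l j_lt l_lt / (j <= l)%N => [wlog_jl|].
  by case: (leqP j l) => [|/ltnW] le; [apply: wlog_jl | move/esym/wlog_jl=> ->].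
move=> E; apply/eqP; rewrite eqn_leq le_jl leqNgt; apply/negP => lt_jl.
have frob : [pchar F].-nat (Q ^ j)%N by rewrite pnatX pcharQ.
suff /eqP : theta ^+ (Q ^ (l - j)) = theta.
  by apply/negP/theta_conj; rewrite subn_gt0 lt_jl (leq_ltn_trans (leq_subr _ _)).
have E' : frobenius_pow frob (theta ^+ (Q ^ (l - j))) = frobenius_pow frob theta.
  by rewrite !frobenius_powE -exprM -expnD subnK // E.
exact: fmorph_inj E'.
Qed.

(* The conjugates theta^(Q^j), j < n, are n distinct roots of \poly_(i < n) c i. *)
Lemma frobenius_conj_free (c : 'I_n -> F) : (forall i, c i ^+ Q = c i) ->
  \sum_(i < n) c i * theta ^+ i = 0 -> forall i, c i = 0.
Proof.
move=> c_fix c_theta i; pose P := \poly_(j < n) oapp c 0 (insub j).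
have root_conj j : root P (theta ^+ (Q ^ j)).
  have frob : [pchar F].-nat (Q ^ j)%N by rewrite pnatX pcharQ.
  apply/eqP; rewrite horner_poly.
  transitivity (frobenius_pow frob (\sum_(k < n) c k * theta ^+ k)).
    rewrite rmorph_sum; apply: eq_bigr => k _; rewrite valK rmorphM rmorphXn /=.
    by rewrite !frobenius_powE (frobenius_fix_exp _ (c_fix k)).
  by rewrite c_theta rmorph0.
have P0 : P = 0.
  apply/eqP; apply: contraT => nzP.
  have roots : all (root P) [seq theta ^+ (Q ^ j) | j <- iota 0 n].
    by apply/allP=> _ /mapP[j _ ->].
  have := max_poly_roots nzP roots uniq_frobenius_conj.
  by rewrite size_map size_iota ltnNge size_poly.
by have := congr1 (fun P : {poly F} => P`_i) P0; rewrite coef_poly ltn_ord valK coef0.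
Qed.

End FrobeniusFree.

Section FiniteFieldBasis.
Variables (K F : finFieldType) (iota : {rmorphism K -> F}) (n : nat) (theta : F).
Hypotheses (pcharK : [pchar F].-nat #|K|)
  (theta_conj : forall e, (0 < e < n)%N -> theta ^+ (#|K| ^ e) != theta).

Lemma basis_coord_inj (f g : 'I_n -> K) :
  \sum_(i < n) iota (f i) * theta ^+ i = \sum_(i < n) iota (g i) * theta ^+ i -> f =1 g.
Proof.
move/eqP; rewrite -subr_eq0 -sumrB => /eqP sum0 i; apply: (fmorph_inj iota).
apply/eqP; rewrite -subr_eq0 -rmorphB; apply/eqP.
apply: (frobenius_conj_free pcharK theta_conj (c := fun i => iota (f i - g i))).
  by move=> j; rewrite -rmorphXn expf_card.
by rewrite -[RHS]sum0; apply: eq_bigr => j _; rewrite rmorphB mulrBl.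
Qed.

Hypothesis card_F : #|F| = (#|K| ^ n)%N.

Lemma basis_coord_surj (x : F) :
  exists f : 'I_n -> K, x = \sum_(i < n) iota (f i) * theta ^+ i.
Proof.
pose sum_coords (f : {ffun 'I_n -> K}) := \sum_(i < n) iota (f i) * theta ^+ i.
have inj_sum : injective sum_coords by move=> f g /basis_coord_inj/ffunP.
have := inj_card_onto inj_sum; rewrite card_ffun card_ord card_F leqnn => /(_ isT x).
by case/codomP=> f ->; exists f.
Qed.

End FiniteFieldBasis.

(** * Embeddings of finite fields *)

Section FactorRMorphism.
Variables (R S T : nzRingType) (f : {rmorphism R -> S}) (g : {rmorphism R -> T}).
Hypothesis f_surj : forall x, exists P, f P == x.

Definition factor_rmorph of (forall P, f P = 0 -> g P = 0) :=
  fun x => g (xchoose (f_surj x)).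

Hypothesis ker_fg : forall P, f P = 0 -> g P = 0.

Lemma factor_rmorphE P : factor_rmorph ker_fg (f P) = g P.
Proof.
have /eqP fQ := xchooseP (f_surj (f P)).
by apply/eqP; rewrite -subr_eq0 -rmorphB ker_fg // rmorphB fQ subrr.
Qed.

Fact factor_rmorph_is_nmod_morphism : nmod_morphism (factor_rmorph ker_fg).
Proof.
split=> [|x y]; first by rewrite -(rmorph0 f) factor_rmorphE rmorph0.
have [[P /eqP<-] [Q /eqP<-]] := (f_surj x, f_surj y).
by rewrite -rmorphD !factor_rmorphE rmorphD.
Qed.

Fact factor_rmorph_is_monoid_morphism : monoid_morphism (factor_rmorph ker_fg).
Proof.
split=> [|x y]; first by rewrite -(rmorph1 f) factor_rmorphE rmorph1.
have [[P /eqP<-] [Q /eqP<-]] := (f_surj x, f_surj y).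
by rewrite -rmorphM !factor_rmorphE rmorphM.
Qed.

HB.instance Definition _ := GRing.isNmodMorphism.Build S T (factor_rmorph ker_fg)
  factor_rmorph_is_nmod_morphism.
HB.instance Definition _ := GRing.isMonoidMorphism.Build S T (factor_rmorph ker_fg)
  factor_rmorph_is_monoid_morphism.

End FactorRMorphism.

Definition prime_field_rmorph p (R : nzRingType) (chR : p \in [pchar R]) : 'F_p -> R :=
  in_alg (pPrimeCharType chR).
(* Keeps [/=] from unfolding it to [in_alg] of the alias [pPrimeCharType chR]. *)
Arguments prime_field_rmorph : simpl never.
HB.instance Definition _ p (R : nzRingType) (chR : p \in [pchar R]) :=
  GRing.RMorphism.copy (prime_field_rmorph chR) (in_alg (pPrimeCharType chR)).

Lemma finField_expf_pred (F : finFieldType) (x : F) : x != 0 -> x ^+ #|F|.-1 = 1.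
Proof.
move=> nz_x; apply: (mulIf nz_x); rewrite mul1r -exprSr prednK ?expf_card //.
exact: ltn_trans (finNzRing_gt1 F).
Qed.

Lemma finField_card_pred_gt0 (F : finFieldType) : (0 < #|F|.-1)%N.
Proof. by rewrite -ltnS prednK ?finNzRing_gt1 // ltnW ?finNzRing_gt1. Qed.

Lemma finField_card_pnat (F : finFieldType) : [pchar F].-nat #|F|.
Proof.
have [p _ chF] := finPcharP F.
by have := pprimeChar_pgroup chF; rewrite /pgroup cardsT (eq_pnat _ (pcharf_eq chF)).
Qed.

Lemma finField_primitive_root (F : finFieldType) m :
  (m %| #|F|.-1)%N -> exists z : F, m.-primitive_root z.
Proof.
set N := #|F|.-1 => dv_m.
have N_gt0 := finField_card_pred_gt0 F.
have /hasP[w _ w_prim] : has N.-primitive_root (enum [pred x : F | x != 0]).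
  apply: has_prim_root; rewrite ?enum_uniq // -?cardE ?cardC1 //.
  by apply/allP=> x; rewrite mem_enum => nz_x; apply/unity_rootP/finField_expf_pred.
exists (w ^+ (N %/ m)); have := exp_prim_root w_prim (N %/ m).
by rewrite (gcdn_idPl (dvdn_div dv_m)) divnA // mulKn.
Qed.

Lemma poly_rmorph_ker_generator (E : fieldType) (S : nzRingType)
    (f : {rmorphism {poly E} -> S}) P0 : P0 != 0 -> f P0 = 0 ->
  exists m, [/\ m != 0, f m = 0 & forall P, f P = 0 -> m %| P].
Proof.
move=> nz_P0 fP0; pose in_ker n := exists m, [/\ m != 0, f m = 0 & size m = n].
have [n [[[m [nz_m fm sz_m]] min_m] _]] := dec_inh_nat_subset_has_unique_least_element
  in_ker (fun n => classic (in_ker n)) (ex_intro _ _ (ex_intro _ P0 (And3 nz_P0 fP0 erefl))).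
exists m; split=> // P fP; apply/modp_eq0P/eqP; apply: contraT => nz_rem.
have f_rem : f (P %% m) = 0.
  by move: fP; rewrite {1}(divp_eq P m) rmorphD rmorphM fm mulr0 add0r.
have /leP := min_m _ (ex_intro _ _ (And3 nz_rem f_rem erefl)).
by rewrite -sz_m leqNgt ltn_modp nz_m.
Qed.

Lemma expf_card_exp (F : finFieldType) (x : F) n : x ^+ (#|F| ^ n) = x.
Proof. by elim: n => [|n IHn]; rewrite ?expr1 // expnSr exprM IHn expf_card. Qed.

Lemma finField_genPoly_dvd_root (F : finFieldType) (P : {poly F}) :
  (1 < size P)%N -> P %| 'X^#|F| - 'X -> exists x, root P x.
Proof.
rewrite finField_genPoly => sz_P /dvdp_prod_XsubC[msk]; case: (mask msk _) => [|x s] E.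
  by move: (eqp_size E) sz_P; rewrite big_nil size_poly1 => ->.
by exists x; rewrite (eqp_root E) big_cons rootM root_XsubC eqxx.
Qed.

(* Evaluating F_p[X] at a generator alpha of the units of K is onto K; its kernel is
   generated by some m dividing X^|F| - X, and evaluating at a root of m in F kills that
   kernel, hence factors through K. *)
Lemma finField_rmorph_exists (K F : finFieldType) p n :
  p \in [pchar K] -> p \in [pchar F] -> #|F| = (#|K| ^ n)%N -> inhabited {rmorphism K -> F}.
Proof.
move=> chK chF cardF; have [alpha alpha_gen] := finField_primitive_root (dvdnn #|K|.-1).
pose evK : {rmorphism {poly 'F_p} -> K} :=
  horner_morph (fun a => mulrC alpha (prime_field_rmorph chK a)).
have evKX : evK 'X = alpha := horner_morphX _.
have evKC a : evK a%:P = prime_field_rmorph chK a := horner_morphC _ a.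
have evK_surj x : exists P, evK P == x.
  have [-> | nz_x] := eqVneq x 0; first by exists 0; rewrite rmorph0.
  have [j ->] := prim_rootP alpha_gen (finField_expf_pred nz_x).
  by exists 'X^j; rewrite rmorphXn evKX.
have nz_P0 : 'X^(#|K|.-1) - 1 != 0 :> {poly 'F_p}.
  have K_gt1 := finNzRing_gt1 K.
  by rewrite -size_poly_eq0 -polyC1 size_XnsubC // -ltnS prednK // ltnW.
have evK_P0 : evK ('X^(#|K|.-1) - 1) = 0.
  by rewrite rmorphB rmorphXn rmorph1 evKX (prim_expr_order alpha_gen) subrr.
have [m [nz_m evK_m m_gen]] := poly_rmorph_ker_generator nz_P0 evK_P0.
have sz_m : (1 < size m)%N.
  rewrite ltnNge; apply: contra nz_m => /size1_polyC m_const; move: evK_m.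
  by rewrite m_const evKC => /eqP; rewrite fmorph_eq0 polyC_eq0.
have [theta root_theta] : exists theta, root (map_poly (prime_field_rmorph chF) m) theta.
  apply: finField_genPoly_dvd_root; first by rewrite size_map_poly.
  have : m %| 'X^#|F| - 'X.
    by apply: m_gen; rewrite rmorphB rmorphXn evKX cardF expf_card_exp subrr.
  by rewrite -(dvdp_map (prime_field_rmorph chF)) rmorphB /= map_polyXn map_polyX.
pose evF : {rmorphism {poly 'F_p} -> F} :=
  horner_morph (fun a => mulrC theta (prime_field_rmorph chF a)).
have ker_evK P : evK P = 0 -> evF P = 0.
  by move/m_gen/dvdpP=> [Q ->]; rewrite rmorphM /= /horner_morph (rootP root_theta) mulr0.
by constructor; exact: (factor_rmorph evK_surj ker_evK).
Qed.

(** * Waring numbers *)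

Section SumsOfElements.
Variable V : nmodType.
Implicit Types (A : pred V) (s : nat) (x : V).

Definition sum_at_most A s x :=
  exists l : seq V, [/\ (size l <= s)%N, all A l & x = \sum_(y <- l) y].

Definition covers A s := forall x, sum_at_most A s x.

Definition least_cover A s := covers A s /\ forall s', covers A s' -> (s <= s')%N.

Lemma sum_at_most_add A s s' x y :
  sum_at_most A s x -> sum_at_most A s' y -> sum_at_most A (s + s') (x + y).
Proof.
move=> [l [sz_l Al ->]] [l' [sz_l' Al' ->]]; exists (l ++ l').
by rewrite size_cat leq_add // all_cat Al Al' big_cat.
Qed.

Lemma sum_at_most_sum A s n (t : 'I_n -> V) :
  (forall i, sum_at_most A s (t i)) -> sum_at_most A (n * s) (\sum_(i < n) t i).
Proof.
elim: n t => [|n IHn] t At; first by exists [::]; rewrite big_nil big_ord0.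
by rewrite big_ord_recr mulSn addnC; apply: sum_at_most_add; [apply: IHn | apply: At].
Qed.

Lemma least_cover_exists A s : covers A s -> exists s0, least_cover A s0.
Proof.
move=> cover_s; have [s0 [[cover_s0 min_s0] _]] := dec_inh_nat_subset_has_unique_least_element
  (covers A) (fun s => classic (covers A s)) (ex_intro _ s cover_s).
by exists s0; split=> // s' /min_s0/leP.
Qed.

End SumsOfElements.

Section CoverTransfer.
Variables (K L : nzRingType) (iota : {rmorphism K -> L}) (n : nat) (theta : L).
Variables (A : pred K) (B : pred L).
Hypotheses
  (coord_surj : forall x, exists f : 'I_n -> K, x = \sum_(i < n) iota (f i) * theta ^+ i)
  (scale_mem : forall (i : 'I_n) w, w \in A -> iota w * theta ^+ i \in B).

Lemma covers_transfer s : covers A s -> covers B (n * s).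
Proof.
move=> cover_s x; have [f ->] := coord_surj x; apply: sum_at_most_sum => i.
have [l [sz_l Al ->]] := cover_s (f i); exists [seq iota w * theta ^+ i | w <- l].
rewrite size_map big_map rmorph_sum mulr_suml; split=> //.
by apply/allP=> _ /mapP[w /(allP Al) Aw ->]; apply: scale_mem.
Qed.

Hypotheses
  (coord_inj : forall f g : 'I_n -> K,
     \sum_(i < n) iota (f i) * theta ^+ i = \sum_(i < n) iota (g i) * theta ^+ i -> f =1 g)
  (B_split : forall z, z \in B -> exists (i : 'I_n) w, w \in A /\ z = iota w * theta ^+ i).

Lemma sum_split_coords l : all B l -> exists G : 'I_n -> seq K,
  [/\ forall i, all A (G i), (\sum_(i < n) size (G i) = size l)%N &
      \sum_(y <- l) y = \sum_(i < n) iota (\sum_(w <- G i) w) * theta ^+ i].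
Proof.
elim: l => [|z l IHl] /=.
  exists (fun _ => [::]); split=> //; first by rewrite big1.
  by rewrite big_nil big1 // => i _; rewrite big_nil rmorph0 mul0r.
case/andP=> /B_split[j [w [Aw ->]]] /IHl[G [AG sz_G sum_G]].
exists (fun i => if i == j then w :: G i else G i); split.
- move=> i; case: eqP => _ /=; last exact: AG.
  by rewrite AG andbT; exact: Aw.
- rewrite (bigD1 j) //= eqxx -sz_G [in RHS](bigD1 j) //= addSn; congr (_.+1 + _).
  by apply: eq_bigr => i /negPf->.
- rewrite big_cons sum_G [in RHS](bigD1 j) //= eqxx big_cons rmorphD mulrDl (bigD1 j) //=.
  by rewrite -addrA; congr (_ + (_ + _)); apply: eq_bigr => i /negPf->.
Qed.

(* Writing iota y0 (1 + theta + ... + theta^(n-1)) as a sum of elements of B splits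
   it into n sums of elements of A, each of them equal to y0. *)
Lemma covers_transfer_lb s y0 S : ~ sum_at_most A s y0 -> covers B S -> (n * s.+1 <= S)%N.
Proof.
move=> not_y0 cover_S; have [l [sz_l Bl E]] := cover_S (\sum_(i < n) iota y0 * theta ^+ i).
have [G [AG sz_G sum_G]] := sum_split_coords Bl.
have G_y0 i : y0 = \sum_(w <- G i) w.
  by apply: (coord_inj (f := fun=> y0) (g := fun i => \sum_(w <- G i) w)); rewrite -sum_G -E.
apply: leq_trans sz_l; rewrite -sz_G -[X in (X * _)%N]card_ord -sum_nat_const.
apply: leq_sum => i _; rewrite ltnNge; apply/negP => sz_Gi.
by apply: not_y0; exists (G i); split; rewrite -?G_y0.
Qed.

Lemma least_cover_transfer s : least_cover A s -> least_cover B (n * s).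
Proof.
case=> cover_s min_s; split=> [|S cover_S]; first exact: covers_transfer.
case: s cover_s min_s => [|s] _ min_s; first by rewrite muln0.
have [y0 not_y0] : exists y0, ~ sum_at_most A s y0.
  by apply: not_all_ex_not => cover_s; have := min_s _ cover_s; rewrite ltnn.
exact: covers_transfer_lb not_y0 cover_S.
Qed.

End CoverTransfer.

Section KthPowers.
Variable F : finFieldType.

Definition kth_powers k : pred F := [pred y | [exists z, y == z ^+ k]].

Lemma kth_powersP k y : reflect (exists z, y = z ^+ k) (y \in kth_powers k).
Proof. by apply: (iffP existsP) => [[z /eqP] | [z ->]]; exists z. Qed.

Lemma waring_sums_covers k s : (0 < k)%N -> waring_sums F k s <-> covers (kth_powers k) s.
Proof.
move=> k_gt0; split=> [sums x | cover x].
  have [f ->] := sums x; exists [seq f i ^+ k | i <- enum 'I_s].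
  rewrite size_map size_enum_ord big_map big_enum; split=> //.
  by apply/allP=> _ /mapP[i _ ->]; apply/kth_powersP; exists (f i).
have [l [sz_l kl ->]] := cover x.
have [l' El] : exists l', l = [seq z ^+ k | z <- l'].
  elim: l kl {sz_l} => [|y l IHl]; first by exists [::].
  by case/andP=> /kth_powersP[z ->] /IHl[l' ->]; exists (z :: l').
rewrite El size_map in sz_l *; exists (fun i => nth 0 l' i).
rewrite big_map (big_nth 0) -(big_mkord xpredT (fun i => nth 0 l' i ^+ k)).
rewrite (big_cat_nat (leq0n _) sz_l) /= [X in _ = _ + X]big1_seq ?addr0 // => i.
by rewrite mem_index_iota => /andP[_ /andP[le_i _]]; rewrite nth_default // expr0n gtn_eqF.
Qed.

Lemma is_waring_number_least_cover k s :
  (0 < k)%N -> is_waring_number F k s <-> least_cover (kth_powers k) s.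
Proof.
move=> k_gt0; rewrite /is_waring_number /least_cover waring_sums_covers //.
by split=> [] [cover min_s]; split=> // s' /(waring_sums_covers _ k_gt0); apply: min_s.
Qed.

Lemma kth_powersE k c y :
  #|F|.-1 = (k * c)%N -> (y \in kth_powers k) = (y == 0) || (y ^+ c == 1).
Proof.
move=> Fkc; have := finField_card_pred_gt0 F; rewrite Fkc muln_gt0 => /andP[k_gt0 c_gt0].
have [w w_gen] := finField_primitive_root (dvdnn #|F|.-1); rewrite Fkc in w_gen.
apply/kth_powersP/orP=> [[z ->] | [/eqP-> | /eqP yc]].
- have [-> | nz_z] := eqVneq z 0; first by left; rewrite expr0n gtn_eqF.
  by right; rewrite -exprM -Fkc finField_expf_pred.
- by exists 0; rewrite expr0n gtn_eqF.
have nz_y : y != 0.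
  by apply: contra_eq_neq yc => ->; rewrite expr0n gtn_eqF // eq_sym oner_eq0.
have [j Ej] := prim_rootP w_gen (etrans (congr1 _ (esym Fkc)) (finField_expf_pred nz_y)).
move: yc; rewrite Ej -exprM => /eqP; rewrite -(prim_order_dvd w_gen) dvdn_pmul2r //.
move=> /divnK Ejk.
by exists (w ^+ (j %/ k)); rewrite -exprM Ejk.
Qed.

End KthPowers.

Arguments kth_powers : clear implicits.

Lemma prim_root_fixed_dvd (L : fieldType) m (z : L) N :
  m.-primitive_root z -> (0 < N)%N -> z ^+ N = z -> (m %| N - 1)%N.
Proof.
move=> z_prim N_gt0 zN; rewrite (prim_order_dvd z_prim); apply/eqP.
have nz_z : z != 0 by rewrite (prim_root_eq0 z_prim) -lt0n (prim_order_gt0 z_prim).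
by apply: (mulIf nz_z); rewrite mul1r -exprSr subn1 prednK.
Qed.

Lemma prim_root_mul_decomp (L : fieldType) c n (beta gamma : L) :
    (c * n).-primitive_root beta -> c.-primitive_root gamma ->
  forall z, z ^+ (c * n) = 1 -> exists (i : 'I_n) j, z = gamma ^+ j * beta ^+ i.
Proof.
move=> beta_prim gamma_prim z /(prim_rootP beta_prim)[m ->].
have := prim_order_gt0 beta_prim; rewrite muln_gt0 => /andP[_ n_gt0].
have /(prim_rootP gamma_prim)[j0 Ej0] : (beta ^+ n) ^+ c = 1.
  by rewrite -exprM mulnC prim_expr_order.
exists (Ordinal (ltn_pmod m n_gt0)), (j0 * (m %/ n))%N.
by rewrite /= exprM -Ej0 -exprM -exprD (mulnC n) -divn_eq.
Qed.

Lemma waring_number_extension (K F : finFieldType) (iota : {rmorphism K -> F}) c n s :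
    (c %| #|K|.-1)%N -> primitive_divisor #|K| n (c * n) -> #|F| = (#|K| ^ n)%N ->
  is_waring_number K (#|K|.-1 %/ c)%N s -> is_waring_number F (#|F|.-1 %/ (c * n))%N (n * s).
Proof.
move=> dv_c [dv_cn cn_prim] cardF.
set k := (#|K|.-1 %/ c)%N; set k' := (#|F|.-1 %/ (c * n))%N.
have Kk : #|K|.-1 = (k * c)%N by rewrite divnK.
have Fk' : #|F|.-1 = (k' * (c * n))%N by rewrite divnK // cardF -subn1.
have := finField_card_pred_gt0 K; rewrite Kk muln_gt0 => /andP[k_gt0 _].
have := finField_card_pred_gt0 F; rewrite Fk' !muln_gt0 => /and3P[k'_gt0 _ n_gt0].
have [zeta zeta_prim] := finField_primitive_root dv_c.
have [beta beta_prim] : exists beta : F, (c * n).-primitive_root beta.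
  by apply: finField_primitive_root; rewrite Fk' dvdn_mull.
have pcharK : [pchar F].-nat #|K|.
  by rewrite (eq_pnat _ (fmorph_pchar iota)) finField_card_pnat.
have beta_conj e : (0 < e < n)%N -> beta ^+ (#|K| ^ e) != beta.
  move=> e_range; apply/negP=> /eqP/(prim_root_fixed_dvd beta_prim).
  by rewrite expn_gt0 (ltnW (finNzRing_gt1 K)) => /(_ isT); apply/negP/cn_prim.
rewrite !is_waring_number_least_cover //.
apply: (least_cover_transfer (iota := iota) (theta := beta)).
- exact: basis_coord_surj pcharK beta_conj cardF.
- move=> i w; rewrite (kth_powersE _ Kk) (kth_powersE _ Fk') => /orP[/eqP-> | /eqP wc].
    by rewrite rmorph0 mul0r eqxx.
  rewrite exprMn -rmorphXn (exprM w c n) wc rmorphXn rmorph1.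
  by rewrite expr1n mul1r -exprM mulnC exprM (prim_expr_order beta_prim) expr1n eqxx orbT.
- exact: basis_coord_inj pcharK beta_conj.
- move=> z; rewrite (kth_powersE _ Fk') => /orP[/eqP-> | /eqP zcn].
    by exists (Ordinal n_gt0), 0; rewrite rmorph0 mul0r (kth_powersE _ Kk) eqxx.
  have iota_zeta_prim : c.-primitive_root (iota zeta) by rewrite fmorph_primitive_root.
  have [i [j ->]] := prim_root_mul_decomp beta_prim iota_zeta_prim zcn.
  exists i, (zeta ^+ j); rewrite rmorphXn (kth_powersE _ Kk) -exprM mulnC exprM.
  by rewrite (prim_expr_order zeta_prim) expr1n eqxx orbT.
Qed.

Lemma covers_prime_field_ones p : prime p -> covers (pred1 (1 : 'F_p)) p.-1.
Proof.
move=> pr_p x; have := ltn_ord x; rewrite [X in (_ < X)%N -> _]Fp_cast // => x_lt.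
exists (nseq x 1); rewrite size_nseq all_nseq /= eqxx orbT -ltnS prednK ?prime_gt0 //.
by split=> //; rewrite big_nseq iter_addr_0 natr_Zp.
Qed.

Lemma waring_number_exists (F : finFieldType) p a c :
    prime p -> #|F| = (p ^ a)%N -> primitive_divisor p a c ->
  exists s, is_waring_number F ((p ^ a - 1) %/ c)%N s.
Proof.
move=> pr_p cardF [dv_c c_prim]; have chF := card_finPcharP cardF pr_p.
have Fpred : #|F|.-1 = (p ^ a - 1)%N by rewrite cardF subn1.
set k := ((p ^ a - 1) %/ c)%N; have Fk : #|F|.-1 = (k * c)%N by rewrite Fpred divnK.
have := finField_card_pred_gt0 F; rewrite Fk muln_gt0 => /andP[k_gt0 _].
have [zeta zeta_prim] : exists zeta : F, c.-primitive_root zeta.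
  by apply: finField_primitive_root; rewrite Fpred.
have card_Fp' : #|'F_p| = p := card_Fp pr_p.
have pcharFp : [pchar F].-nat #|'F_p| by rewrite card_Fp' (eq_pnat _ (pcharf_eq chF)) pnat_id.
have zeta_conj e : (0 < e < a)%N -> zeta ^+ (#|'F_p| ^ e) != zeta.
  move=> e_range; apply/negP=> /eqP/(prim_root_fixed_dvd zeta_prim).
  by rewrite card_Fp' expn_gt0 prime_gt0 // => /(_ isT); apply/negP/c_prim.
have cover : covers (kth_powers F k) (a * p.-1).
  apply: (covers_transfer (iota := prime_field_rmorph chF) (theta := zeta) (A := pred1 1)
    _ _ (covers_prime_field_ones pr_p)).
    by apply: basis_coord_surj pcharFp zeta_conj _; rewrite card_Fp'.
  move=> i w /eqP->; rewrite rmorph1 mul1r (kth_powersE _ Fk) -exprM mulnC exprM.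
  by rewrite (prim_expr_order zeta_prim) expr1n eqxx orbT.
have [s /(is_waring_number_least_cover _ _ k_gt0) waring_s] := least_cover_exists cover.
by exists s.
Qed.

Local Close Scope ring_scope.

Theorem mainTheorem14 (p r a c t : nat) (F1 F2 : finFieldType) :
  prime p -> prime r -> r != p ->
  0 < a -> 0 < c -> 2 <= t ->
  primitive_divisor p a c ->
  coprime ((p ^ a - 1) %/ c) r ->
  (r = 2 /\ p ^ a = 1 %[mod 4]) \/
  (odd r /\ exists h, h <= t - 1 /\ mult_order_mod (r ^ t) (p ^ a) (r ^ h)) ->
  #|F1| = p ^ (a * r ^ t) -> #|F2| = p ^ a ->
  exists s, is_waring_number F2 ((p ^ a - 1) %/ c) s /\
            is_waring_number F1 ((p ^ (a * r ^ t) - 1) %/ (c * r ^ t)) (r ^ t * s).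
Proof.
(* [r != p], [0 < a] and [0 < c] follow from the other hypotheses. *)
move=> pr_p pr_r _ _ _ t_ge2 c_prim cop r_cond cardF1 cardF2.
have t_gt0 : 0 < t by apply: leq_trans t_ge2.
have q_gt0 : 0 < p ^ a by rewrite expn_gt0 prime_gt0.
have lte : lte_cond r (p ^ a - 1).
  case: r_cond => [[-> q_mod4] | [odd_r [h [_ [_ [q_ord _]]]]]]; apply/orP; [left | right].
    by rewrite eqxx -eqn_mod_dvd //; apply/eqP.
  by rewrite odd_r (ppow_order_dvd_sub1 pr_r t_gt0 q_gt0 q_ord).
have crt_prim := primitive_divisor_mul_ppow pr_r t_gt0 c_prim.1 cop lte.
have [s waring_s] := waring_number_exists pr_p cardF2 c_prim.
have cardF12 : #|F1| = #|F2| ^ r ^ t by rewrite cardF1 cardF2 expnM.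
have chF2 := card_finPcharP cardF2 pr_p.
have chF1 := card_finPcharP cardF1 pr_p.
have [iota] := finField_rmorph_exists chF2 chF1 cardF12.
exists s; split=> //.
have := waring_number_extension iota _ _ cardF12; rewrite cardF1 cardF2 -!subn1.
by move/(_ c s c_prim.1 crt_prim waring_s).
Qed.
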